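(* Write $\chi_n^*(M_{1,2}(F))=\sum m_{\langle\lambda\rangle}\chi_{\langle\lambda\rangle}$, the sum over multipartitions $\langle\lambda\rangle=(\lambda(1),\lambda(2),\lambda(3),\lambda(4))\vdash n$ with $h(\lambda(1))\le2$, $h(\lambda(2))\le3$, $h(\lambda(3))\le2$, $h(\lambda(4))\le2$. Let $\langle\lambda\rangle=(\emptyset,\lambda(2),\lambda(3),\lambda(4))$ with $\lambda(2)=(\gamma_1+\gamma_2+\gamma_3,\gamma_2+\gamma_3,\gamma_3)\neq\emptyset$, $\lambda(3)=(w_1+w_2,w_2)\neq\emptyset$, $\lambda(4)=(\rho_1+\rho_2,\rho_2)\neq\emptyset$ (all $\gamma_i,w_i,\rho_i\ge0$ integers), and let $l=\max\{w_1,\rho_1\}$. If either $|w_1-\rho_1|\le2$, or $|w_1-\rho_1|\ge3$ and $\gamma_1+\gamma_2\ge\lceil l/2\rceil-1$, then $m_{\langle\lambda\rangle}\neq0$.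
   Context: $F$ is a field of characteristic zero. $M_{1,2}(F)$ is $M_3(F)$ with $\mathbb{Z}_2$-grading with even part spanned by $e_{11},e_{22},e_{23},e_{32},e_{33}$, odd part by $e_{12},e_{13},e_{21},e_{31}$, and orthosymplectic superinvolution $*$ sending the matrix with rows $(a,b,c),(d,e,f),(g,h,i)$ to the matrix with rows $(a,-g,d),(c,i,-f),(-b,-h,e)$. Its even symmetric, even skew, odd symmetric, odd skew parts are $\mathrm{span}\{e_{11},e_{22}+e_{33}\}$, $\mathrm{span}\{e_{22}-e_{33},e_{23},e_{32}\}$, $\mathrm{span}\{e_{12}-e_{31},e_{13}+e_{21}\}$, $\mathrm{span}\{e_{12}+e_{31},e_{13}-e_{21}\}$. In the free $*$-superalgebra on variables $y_i^+,y_i^-,z_i^+,z_i^-$ (even symmetric, even skew, odd symmetric, odd skew), a $*$-identity is a polynomial vanishing under all substitutions of the variables by elements of the corresponding parts; $Id_2^*$ denotes the set of them. $P_n^*$ is the span of the monomials $w_{\sigma(1)}\cdots w_{\sigma(n)}$, $\sigma\in S_n$, $w_i\in\{y_i^+,y_i^-,z_i^+,z_i^-\}$. The group $\mathbb{H}_n=(\mathbb{Z}_2\times\mathbb{Z}_2)\wr S_n$, with $\mathbb{Z}_2\times\mathbb{Z}_2=\{1,*,\zeta,*\zeta\}$, acts on $P_n^*$: $h=(a_1,\dots,a_n;\sigma)$ sends $y_i^+\mapsto y_{\sigma(i)}^+$, $y_i^-\mapsto \pm y_{\sigma(i)}^-$ (sign $+$ iff $a_{\sigma(i)}\in\{1,\zeta\}$),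 $z_i^+\mapsto\pm z_{\sigma(i)}^+$ ($+$ iff $a_{\sigma(i)}\in\{1,*\}$), $z_i^-\mapsto\pm z_{\sigma(i)}^-$ ($+$ iff $a_{\sigma(i)}\in\{1,*\zeta\}$). The character of $P_n^*/(P_n^*\cap Id_2^*(M_{1,2}(F)))$ is the $n$-th $*$-cocharacter $\chi_n^*(M_{1,2}(F))$. Irreducible $\mathbb{H}_n$-characters $\chi_{\langle\lambda\rangle}$ correspond to multipartitions $\langle\lambda\rangle=(\lambda(1),\dots,\lambda(4))$, $\lambda(i)\vdash n_i$, $\sum n_i=n$, with $\lambda(1),\dots,\lambda(4)$ corresponding to the variable types $y^+,y^-,z^+,z^-$; equivalently $m_{\langle\lambda\rangle}$ is the multiplicity of $\chi_{\lambda(1)}\otimes\cdots\otimes\chi_{\lambda(4)}$ in the $S_{n_1}\times\cdots\times S_{n_4}$-character of the multilinear polynomials with $n_1,\dots,n_4$ variables of the four types modulo identities. $h(\mu)$ is the height of a partition $\mu$; $\emptyset$ is the empty partition; $\lceil c\rceil$ is the least integer $\ge c$. *)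

From HB Require Import structures.
From mathcomp Require Import all_boot all_order all_algebra all_fingroup.
From mathcomp Require Import boolp.
Set Implicit Arguments. Unset Strict Implicit. Unset Printing Implicit Defensive.
Import GRing.Theory.

Section Defs.
Variable F : fieldType.
Local Open Scope ring_scope.

(** Entries of a 3x3 matrix, indexed by nat (0-based: row 0 is row 1 of the paper). *)
Definition ent (A : 'M[F]_3) (i j : nat) : F := A (inord i) (inord j).

Definition mx3 (a b c d e f g h k : F) : 'M[F]_3 :=
  \matrix_(r < 3, s < 3)
    nth 0 (nth [::] [:: [:: a; b; c]; [:: d; e; f]; [:: g; h; k]] r) s.

Definition superstar (A : 'M[F]_3) : 'M[F]_3 :=
  mx3 (ent A 0 0) (- ent A 2 0) (ent A 1 0)
      (ent A 0 2) (ent A 2 2) (- ent A 1 2)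
      (- ent A 0 1) (- ent A 2 1) (ent A 1 1).

Definition is_even (A : 'M[F]_3) : bool :=
  [&& ent A 0 1 == 0, ent A 0 2 == 0, ent A 1 0 == 0 & ent A 2 0 == 0].
Definition is_odd (A : 'M[F]_3) : bool :=
  [&& ent A 0 0 == 0, ent A 1 1 == 0, ent A 1 2 == 0, ent A 2 1 == 0
    & ent A 2 2 == 0].

(** Variable types: 0 = y^+ (even symmetric), 1 = y^- (even skew),
    2 = z^+ (odd symmetric), 3 = z^- (odd skew). *)
Definition in_part (t : nat) (A : 'M[F]_3) : bool :=
  match t with
  | 0 => is_even A && (superstar A == A)
  | 1 => is_even A && (superstar A == - A)
  | 2 => is_odd A && (superstar A == A)
  | _ => is_odd A && (superstar A == - A)
  end.

(** Multilinear polynomials in n variables x_0..x_{n-1}: linear combinations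
    of the monomials x_{s(0)} ... x_{s(n-1)}, s a permutation; represented by
    their coefficient function. *)
Local Notation mlpoly n := {ffun {perm 'I_n} -> F}.

Definition eval (n : nat) (f : mlpoly n) (A : 'I_n -> 'M[F]_3) : 'M[F]_3 :=
  \sum_(s : {perm 'I_n}) f s *: \prod_(k < n) A (s k).

(** Action of t in S_n relabelling variables x_i |-> x_{t(i)}:
    monomial s |-> t o s  (= s * t in mathcomp's convention). *)
Definition act (n : nat) (t : {perm 'I_n}) (f : mlpoly n) : mlpoly n :=
  [ffun s => f (s * t^-1)%g].

(** Multipartition lam = (lam(1),...,lam(4)) (list of 4 partitions, each a
    list of row lengths).  The cells (block, row, column) of the canonical
    multitableau, numbered consecutively row by row, block by block.
    Variable number i is the i-th cell; its type is its block. *)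
Definition cells (lam : seq (seq nat)) : seq (nat * nat * nat) :=
  flatten [seq flatten [seq [seq (b, r, c) | c <- iota 0 (nth 0 (nth [::] lam b) r)]
                       | r <- iota 0 (size (nth [::] lam b))]
          | b <- iota 0 (size lam)].

Section Mult.
Variable lam : seq (seq nat).
Local Notation n := (size (cells lam)).

Definition cell (i : 'I_n) : nat * nat * nat := nth (0, 0, 0)%N (cells lam) i.
Definition blk (i : 'I_n) : nat := (cell i).1.1.
Definition rowkey (i : 'I_n) : nat * nat := ((cell i).1.1, (cell i).1.2).
Definition colkey (i : 'I_n) : nat * nat := ((cell i).1.1, (cell i).2).

Definition is_star_identity (f : mlpoly n) : Prop :=
  forall A : 'I_n -> 'M[F]_3, (forall i, in_part (blk i) (A i)) -> eval f A = 0.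

Definition rowgrp : {set {perm 'I_n}} :=
  [set p : {perm 'I_n} | [forall i, rowkey (p i) == rowkey i]].
Definition colgrp : {set {perm 'I_n}} :=
  [set p : {perm 'I_n} | [forall i, colkey (p i) == colkey i]].

Definition young (f : mlpoly n) : mlpoly n :=
  [ffun s => \sum_(r in rowgrp) \sum_(c in colgrp)
                ((-1) ^+ odd_perm c) * act r (act c f) s].

Definition mult_ge (k : nat) : Prop :=
  exists fs : 'I_k -> mlpoly n,
    forall cs : 'I_k -> F,
      is_star_identity [ffun s => \sum_(j < k) cs j * young (fs j) s] -> forall j, cs j = 0.

(** m_<lam> = dim e (P_{n1..n4} / (P_{n1..n4} cap Id^star)), which is the
    multiplicity of chi_{lam(1)} (x) ... (x) chi_{lam(4)}. *)
Definition mult : nat := (\max_(k < (factorial n).+1 | `[< mult_ge k >]) k)%N.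

End Mult.
End Defs.

Definition absdiff (a b : nat) : nat := (a - b + (b - a))%N.

From HB Require Import structures.
From mathcomp Require Import all_boot all_order all_algebra all_fingroup.
From mathcomp Require Import zify ring boolp.
Set Implicit Arguments. Unset Strict Implicit. Unset Printing Implicit Defensive.
Import GRing.Theory.

(* Evaluate the Young symmetrizer of one monomial at the substitution sending every variable
   of row r of lambda(2), lambda(3), lambda(4) to a fixed matrix Y_r, Z_r, W_r of the required
   type.  The substitution is constant on rows, so the row symmetrizer only contributes the
   factor |R|, nonzero in characteristic 0, while the column antisymmetrizer factors as the
   product, over the columns in the order fixed by the monomial, of the standard polynomials of
   the matrices of each column.  Every such column value sends a matrix unit E_1s to a nonzero
   multiple of a matrix unit E_1s', along a partial transition s -> s', so the product is
   nonzero once the columns are ordered along a path of this automaton.  The height-one columns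
   Z_1 and W_1 can be alternated; the |w1 - rho1| surplus ones need a column of lambda(2) of
   height at most 2 after every second one, i.e. (|w1 - rho1| - 1)/2 <= gamma1 + gamma2 of them,
   which the hypothesis guarantees. *)

Section NumberOcc.
Variable T : eqType.

(* A word of block labels lists columns of a multitableau: the j-th occurrence of b (counting
   from cnt b) stands for column j of block b. *)
Fixpoint number_occ (cnt : T -> nat) (p : seq T) : seq (T * nat) :=
  if p is b :: p' then
    (b, cnt b) :: number_occ (fun b' => if b' == b then (cnt b').+1 else cnt b') p'
  else [::].

Lemma mem_number_occ p cnt b j :
  ((b, j) \in number_occ cnt p) = (cnt b <= j < cnt b + count_mem b p).
Proof.
elim: p cnt => [|b0 p IH] cnt /=; first by rewrite addn0; case: leqP => //= /leq_gtF ->.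
rewrite in_cons IH xpair_eqE.
case: (eqVneq b b0) => [->|bb0] /=; last by rewrite add0n.
by case: (eqVneq j (cnt b0)) => [->|ne] /=; lia.
Qed.

Lemma number_occ_uniq p cnt : uniq (number_occ cnt p).
Proof. by elim: p cnt => [|b p IH] cnt //=; rewrite IH andbT mem_number_occ eqxx; lia. Qed.

Lemma eq_number_occ p cnt cnt' : cnt =1 cnt' -> number_occ cnt p = number_occ cnt' p.
Proof.
elim: p cnt cnt' => [|b p IH] cnt cnt' E //=; rewrite E; congr (_ :: _).
by apply: IH => b'; rewrite E.
Qed.

Lemma number_occ_cat p1 p2 cnt : number_occ cnt (p1 ++ p2) =
  number_occ cnt p1 ++ number_occ (fun b => cnt b + count_mem b p1) p2.
Proof.
elim: p1 cnt => [|b p1 IH] cnt /=; first by apply: eq_number_occ => b; rewrite addn0.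
rewrite IH; congr (_ :: _ ++ _); apply: eq_number_occ => b' /=.
by case: (eqVneq b' b) => [->|nb]; rewrite ?eqxx /=; lia.
Qed.

End NumberOcc.

Fixpoint run (T S : Type) (tr : T -> S -> option S) (w : seq T) (s : S) : option S :=
  if w is x :: w' then obind (run tr w') (tr x s) else Some s.

Lemma run_cat (T S : Type) (tr : T -> S -> option S) w1 w2 s :
  run tr (w1 ++ w2) s = obind (run tr w2) (run tr w1 s).
Proof. by elim: w1 s => [|x w1 IH] s //=; case: (tr x s). Qed.

Section ColumnRun.
Variables (T : eqType) (S : Type) (ntall : T -> nat) (tall short : T -> S -> option S).

Definition column_tr (k : T * nat) := if k.2 < ntall k.1 then tall k.1 else short k.1.

Lemma run_short_columns p cnt s : (forall b, ntall b <= cnt b) ->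
  run column_tr (number_occ cnt p) s = run short p s.
Proof.
elim: p cnt s => [|b p IH] cnt s //= H.
rewrite /column_tr /= ltnNge H /=; case: (short b s) => //= s'.
by apply: IH => b'; case: eqP => _ //; apply: leqW.
Qed.

Lemma run_tall_columns m b cnt s : cnt b + m <= ntall b -> tall b s = Some s ->
  run column_tr (number_occ cnt (nseq m b)) s = Some s.
Proof.
elim: m cnt => [|m IH] cnt //= H E.
by rewrite /column_tr /= ifT ?E /= ?IH ?eqxx //; lia.
Qed.

End ColumnRun.

Section Words.
Variable T : eqType.

Definition alt_word (x y : T) m := flatten (nseq m [:: x; y]).

Definition sep_word (x y : T) d :=
  if d is m.+1 then x :: flatten (nseq m./2 [:: x; y; x]) ++ nseq (odd m) x else [::].

Lemma count_flatten_nseq (a : pred T) m s : count a (flatten (nseq m s)) = m * count a s.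
Proof. by elim: m => //= m IH; rewrite count_cat IH mulSn. Qed.

Lemma count_alt_word b x y m : count_mem b (alt_word x y m) = m * ((x == b) + (y == b)).
Proof. by rewrite count_flatten_nseq /= addn0. Qed.

Lemma count_sep_word b x y d :
  count_mem b (sep_word x y d) = (x == b) * d + (y == b) * (d.-1)./2.
Proof.
case: d => [|m]; first by rewrite !muln0.
rewrite /= count_cat count_flatten_nseq count_nseq /= addn0.
have := odd_double_half m; rewrite -!mul2n.
by case: (x == b); case: (y == b) => /=; lia.
Qed.

Section Run.
Variables (S : Type) (tr : T -> S -> option S) (x y z : T) (s0 s1 s2 : S).
Hypotheses (xs0 : tr x s0 = Some s1) (xs1 : tr x s1 = Some s2) (ys1 : tr y s1 = Some s0)
  (zs0 : tr z s0 = Some s2) (zs2 : tr z s2 = Some s0).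

Lemma run_alt_word m : run tr (alt_word x y m) s0 = Some s0.
Proof. by elim: m => //= m IH; rewrite xs0 /= ys1. Qed.

Lemma run_sep_word d : exists s, run tr (sep_word x z d) s0 = Some s.
Proof.
case: d => [|m] /=; first by exists s0.
rewrite xs0 /= run_cat.
have -> : run tr (flatten (nseq m./2 [:: x; z; x])) s1 = Some s1.
  by elim: (m./2) => //= q IH; rewrite xs1 /= zs2 /= xs0.
by case: (odd m) => /=; [rewrite xs1; exists s2|exists s1].
Qed.

Lemma run_nseq_swap e : run tr (nseq e z) (if odd e then s2 else s0) = Some s0.
Proof. by elim: e => //= e IH; case: (odd e) IH => /= IH; rewrite ?zs0 ?zs2. Qed.

End Run.
End Words.

Section SignedSums.
Variables (I : finType) (R : nzRingType).
Local Open Scope ring_scope.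

Lemma big_pred_uniq_seq (J : finType) (P : pred J) (L : seq J) (G : J -> R) :
  uniq L -> all P L -> (#|P| <= size L)%N -> \sum_(c | P c) G c = \sum_(c <- L) G c.
Proof.
move=> uL /allP PL cL.
have [_ eqL] : (size L = size (enum P)) * (L =i enum P).
  by apply: uniq_min_size uL _ _; [move=> c /PL; rewrite mem_enum|rewrite -cardE].
by rewrite -big_enum; apply/perm_big/uniq_perm; rewrite ?enum_uniq // => c; rewrite eqL.
Qed.

Lemma sum_sign_perm_on1 (x : I) (G : {perm I} -> R) :
  \sum_(c | perm_on [set x] c) (-1) ^+ odd_perm c * G c = G 1%g.
Proof.
rewrite (@big_pred_uniq_seq _ _ [:: 1%g]) /= ?perm_on1 ?card_perm ?cards1 //.
by rewrite big_seq1 odd_perm1 mul1r.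
Qed.

Lemma sum_sign_perm_on2 (x y : I) (G : {perm I} -> R) : x != y ->
  \sum_(c | perm_on [set x; y] c) (-1) ^+ odd_perm c * G c = G 1%g - G (tperm x y).
Proof.
move=> xy; rewrite (@big_pred_uniq_seq _ _ [:: 1%g; tperm x y]).
- by rewrite !big_cons big_nil odd_perm1 odd_tperm xy mul1r addr0 expr1 mulN1r.
- rewrite /= inE andbT; apply: contra xy => /eqP/permP/(_ x).
  by rewrite perm1 tpermL => ->.
- by rewrite /= perm_on1 tperm_on.
- by rewrite card_perm cards2 xy.
Qed.

Lemma sum_sign_perm_on3 (x y z : I) (G : {perm I} -> R) : x != y -> x != z -> y != z ->
  \sum_(c | perm_on [set x; y; z] c) (-1) ^+ odd_perm c * G c =
  G 1%g - G (tperm x y) - G (tperm x z) - G (tperm y z)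
  + G (tperm x y * tperm x z)%g + G (tperm x z * tperm x y)%g.
Proof.
move=> xy xz yz.
have tyx : tperm x z y = y by rewrite tpermD // eq_sym.
have txy : tperm y z x = x by rewrite tpermD // eq_sym.
have txz : tperm x y z = z by rewrite tpermD.
rewrite (@big_pred_uniq_seq _ _ [:: 1%g; tperm x y; tperm x z; tperm y z;
                        (tperm x y * tperm x z)%g; (tperm x z * tperm x y)%g]).
- rewrite !big_cons big_nil !odd_permM odd_perm1 !odd_tperm xy xz yz /=.
  by rewrite !expr0 !expr1 !mul1r !mulN1r addr0 !addrA.
- apply: (@map_uniq _ _ (fun c : {perm I} => (c x, c y))).
  rewrite /= !permM !perm1 !tpermL !tpermR tyx txy txz !tpermR tpermL /= !inE !xpair_eqE.
  by rewrite !eqxx (negPf xy) (negPf xz) (negPf yz) !(eq_sym y) !(eq_sym z) /= (negPf xy) !andbF.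
- have tp a b : a \in [set x; y; z] -> b \in [set x; y; z] ->
      perm_on [set x; y; z] (tperm a b).
    by move=> aS bS; apply: subset_trans (tperm_on _ _) _; apply/subsetP => w /set2P[] ->.
  by rewrite /= perm_on1 !perm_onM ?tp // !inE eqxx ?orbT.
- rewrite card_perm (setUC _ [set z]) cardsU1 cards2 !inE negb_or xy.
  by rewrite eq_sym xz eq_sym yz.
Qed.

End SignedSums.

Section Fibers.
Variables (I : finType) (K : eqType) (kappa : I -> K) (R : nzRingType) (V : I -> R).
Local Open Scope ring_scope.

Definition fiber (k : K) : seq I := [seq x <- enum I | kappa x == k].

Definition fiber_perms (ks : seq K) : {set {perm I}} :=
  [set c : {perm I} | perm_on [set x | kappa x \in ks] c && [forall x, kappa (c x) == kappa x]].

Definition fiber_alt (k : K) : R :=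
  \sum_(c in fiber_perms [:: k]) (-1) ^+ odd_perm c * \prod_(x <- fiber k) V (c x).

Lemma fiber_perms_key ks c x : c \in fiber_perms ks -> kappa (c x) = kappa x.
Proof. by rewrite inE => /andP[_ /forallP /(_ x) /eqP]. Qed.

Lemma fiber_perms_on ks c : c \in fiber_perms ks -> perm_on [set x | kappa x \in ks] c.
Proof. by rewrite inE => /andP[]. Qed.

Lemma mem_fiber k x : (x \in fiber k) = (kappa x == k).
Proof. by rewrite mem_filter mem_enum andbT. Qed.

Lemma fiber_uniq k : uniq (fiber k).
Proof. exact/filter_uniq/enum_uniq. Qed.

Lemma mem_flatten_fibers ks x : (x \in flatten (map fiber ks)) = (kappa x \in ks).
Proof. by elim: ks => [|k ks IH] //=; rewrite mem_cat IH mem_fiber in_cons eq_sym. Qed.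

Lemma flatten_fibers_uniq ks : uniq ks -> uniq (flatten (map fiber ks)).
Proof.
elim: ks => [|k ks IH] //= /andP[kks uks]; rewrite cat_uniq fiber_uniq IH // andbT.
by apply/hasP => -[x]; rewrite mem_flatten_fibers mem_fiber => xks /eqP xk; rewrite -xk xks in kks.
Qed.

Lemma perm_flatten_fibers ks : uniq ks -> (forall x, kappa x \in ks) ->
  perm_eq (flatten (map fiber ks)) (enum I).
Proof.
move=> uks allk; apply: uniq_perm; rewrite ?flatten_fibers_uniq ?enum_uniq // => x.
by rewrite mem_flatten_fibers allk mem_enum.
Qed.

Section Cons.
Variables (k : K) (ks : seq K).
Hypothesis kks : k \notin ks.

Lemma fiber_perms_mulE c1 c2 x : c1 \in fiber_perms [:: k] -> c2 \in fiber_perms ks ->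
  (c1 * c2)%g x = if kappa x == k then c1 x else c2 x.
Proof.
move=> C1 C2; rewrite permM; case: ifPn => xk.
  apply: (out_perm (fiber_perms_on C2)); rewrite inE (fiber_perms_key _ C1).
  by rewrite (eqP xk).
by rewrite (out_perm (fiber_perms_on C1)) // inE mem_seq1.
Qed.

Lemma fiber_perms_mul_inj :
  {in setX (fiber_perms [:: k]) (fiber_perms ks) &, injective (fun p => p.1 * p.2)%g}.
Proof.
move=> [a1 a2] [b1 b2] /setXP[/= A1 A2] /setXP[/= B1 B2] /= eqab.
have e1 : a1 = b1.
  apply/permP => x; case: (boolP (kappa x == k)) => xk.
    by move/permP/(_ x): eqab; rewrite !fiber_perms_mulE // xk.
  by rewrite (out_perm (fiber_perms_on A1)) ?(out_perm (fiber_perms_on B1)) // inE mem_seq1.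
by subst b1; congr (_, _); apply: (mulgI a1).
Qed.

Lemma perm_split_on (c : {perm I}) (P : pred I) : (forall x, P (c x) = P x) ->
  {d : {perm I} | forall x, d x = if P x then c x else x}.
Proof.
move=> cP.
have dinj : injective (fun x => if P x then c x else x).
  move=> x y /=; case: ifP => Px; case: ifP => Py; first exact: perm_inj.
  - by move=> E; move: Px; rewrite -cP E Py.
  - by move=> E; move: Py; rewrite -cP -E Px.
  - by [].
by exists (perm dinj) => x; rewrite permE.
Qed.

Lemma fiber_perms_cons :
  [set (p.1 * p.2)%g | p in setX (fiber_perms [:: k]) (fiber_perms ks)] = fiber_perms (k :: ks).
Proof.
apply/setP => c; apply/imsetP/idP => [[[c1 c2] /setXP[/= C1 C2] ->]|Cc].
  rewrite inE; apply/andP; split.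
    apply: perm_onM.
      by apply: subset_trans (fiber_perms_on C1) _; apply/subsetP=> x; rewrite !inE => ->.
    apply: subset_trans (fiber_perms_on C2) _.
    by apply/subsetP=> x; rewrite !inE => ->; rewrite orbT.
  by apply/forallP => x; rewrite permM (fiber_perms_key _ C2) (fiber_perms_key _ C1).
have cK (P : pred K) x : P (kappa (c x)) = P (kappa x) by rewrite (fiber_perms_key _ Cc).
have [c1 c1E] := @perm_split_on c (fun x => kappa x == k) (cK (pred1 k)).
have [c2 c2E] := @perm_split_on c (fun x => kappa x != k) (cK (predC1 k)).
exists (c1, c2); last first.
  apply/permP => x; rewrite permM c1E c2E; case: (eqVneq (kappa x) k) => [xk|->] //.
  by move: (cK (pred1 k) x); rewrite /= xk eqxx => ->.
rewrite inE /= !inE; apply/andP; split; apply/andP; split.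
- by apply/subsetP => x; rewrite !inE c1E /=; case: ifP; rewrite ?eqxx.
- by apply/forallP => x; rewrite c1E; case: ifP => // _; rewrite (fiber_perms_key _ Cc).
- apply/subsetP => x; rewrite !inE c2E /=; case: ifP => [kx cx|_]; last by rewrite eqxx.
  by have := subsetP (fiber_perms_on Cc) x; rewrite !inE cx (negPf kx) => /(_ isT).
- by apply/forallP => x; rewrite c2E; case: ifP => // _; rewrite (fiber_perms_key _ Cc).
Qed.

End Cons.

Lemma fiber_perms_nil : fiber_perms [::] = [set 1%g].
Proof.
have S0 : [set x | kappa x \in [::]] = set0 by apply/setP => x; rewrite !inE.
apply/setP => c; rewrite !inE S0; apply/andP/eqP => [[c0 _]|->].
  by apply: (perm_on_id c0); rewrite cards0.
by split; [exact: perm_on1|apply/forallP => x; rewrite perm1].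
Qed.

Lemma big_fiber_perms ks : uniq ks ->
  \sum_(c in fiber_perms ks) (-1) ^+ odd_perm c * \prod_(x <- flatten (map fiber ks)) V (c x)
  = \prod_(k <- ks) fiber_alt k.
Proof.
elim: ks => [_|k ks IH /= /andP[kks uks]].
  by rewrite fiber_perms_nil big_set1 odd_perm1 !big_nil mul1r.
rewrite big_cons -(IH uks) mulr_suml -fiber_perms_cons // big_imset /=; last first.
  exact: fiber_perms_mul_inj.
rewrite (eq_bigl [pred p | (p.1 \in fiber_perms [:: k]) && (p.2 \in fiber_perms ks)]).
  2: by case=> a b; rewrite in_setX.
rewrite -(pair_big _ _ (fun a b => (-1) ^+ odd_perm (a * b)%g * \prod_(x <- _) V ((a * b)%g x))) /=.
apply: eq_bigr => a Aa; rewrite mulr_sumr; apply: eq_bigr => b Bb.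
rewrite odd_permM signr_addb big_cat /=.
rewrite (eq_big_seq (fun x => V (a x))); last first.
  by move=> x; rewrite mem_fiber => xk; rewrite (fiber_perms_mulE kks) // xk.
rewrite [\prod_(x <- flatten _) _](eq_big_seq (fun x => V (b x))); last first.
  move=> x; rewrite mem_flatten_fibers => xks; rewrite (fiber_perms_mulE kks) //.
  by case: eqP xks => // ->; rewrite (negPf kks).
by rewrite -!mulrA; congr (_ * _); rewrite !mulrA (commr_sign _ b).
Qed.

Lemma fiber_perms1 k c : (c \in fiber_perms [:: k]) = perm_on [set x | x \in fiber k] c.
Proof.
have Sk : [set x | kappa x \in [:: k]] = [set x | x \in fiber k].
  by apply/setP => x; rewrite !inE mem_fiber.
rewrite inE Sk; case pc: (perm_on _ c) => //=; apply/forallP => x.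
case: (boolP (x \in fiber k)) => xk; last by rewrite (out_perm pc) ?inE.
have : c x \in [set y | y \in fiber k] by rewrite (perm_closed x pc) inE.
by rewrite inE !mem_fiber in xk * => /eqP ->; rewrite (eqP xk).
Qed.

Lemma fiber_alt_perm_on k :
  fiber_alt k = \sum_(c | perm_on [set x | x \in fiber k] c)
                  (-1) ^+ odd_perm c * \prod_(x <- fiber k) V (c x).
Proof. by apply: eq_bigl => c; rewrite fiber_perms1. Qed.

Lemma fiber_alt1 k x : fiber k = [:: x] -> fiber_alt k = V x.
Proof.
move=> fk; rewrite fiber_alt_perm_on fk (_ : [set y | _] = [set x]) ?sum_sign_perm_on1.
  by rewrite big_seq1 perm1.
by apply/setP => y; rewrite !inE.
Qed.

Lemma fiber_alt2 k x y : fiber k = [:: x; y] -> fiber_alt k = V x * V y - V y * V x.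
Proof.
move=> fk; have := fiber_uniq k; rewrite fk /= inE andbT => xy.
rewrite fiber_alt_perm_on fk (_ : [set z | _] = [set x; y]) ?sum_sign_perm_on2 //.
  by rewrite !big_cons !big_nil !perm1 tpermL tpermR !mulr1.
by apply/setP => z; rewrite !inE.
Qed.

Definition standard3 (a b c : R) :=
  a * b * c - b * a * c - c * b * a - a * c * b + b * c * a + c * a * b.

Lemma fiber_alt3 k x y z : fiber k = [:: x; y; z] -> fiber_alt k = standard3 (V x) (V y) (V z).
Proof.
move=> fk; have := fiber_uniq k; rewrite fk /= !inE !negb_or => /and3P[/andP[xy xz] yz _].
rewrite fiber_alt_perm_on fk (_ : [set w | _] = [set x; y; z]) ?sum_sign_perm_on3 //.
  have [tzy tzx tyz] : [/\ tperm x z y = y, tperm y z x = x & tperm x y z = z].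
    by rewrite !tpermD // eq_sym.
  rewrite !big_cons !big_nil !permM !perm1 !tpermL !tpermR tzy tzx tyz !tpermL !tpermR.
  by rewrite !mulr1 !mulrA.
by apply/setP => w; rewrite !inE orbA.
Qed.

End Fibers.

Section Cells.
Variable lam : seq (seq nat).
Local Notation n := (size (cells lam)).

Definition column_cells (k : nat * nat) : seq (nat * nat * nat) :=
  [seq t <- cells lam | (t.1.1, t.2) == k].

Lemma map_cell_enum : map (@cell lam) (enum 'I_n) = cells lam.
Proof.
rewrite -[RHS](mkseq_nth (0, 0, 0)%N) /mkseq -val_enum_ord -map_comp.
by apply: eq_map => i.
Qed.

Lemma map_cell_fiber k : map (@cell lam) (fiber (@colkey lam) k) = column_cells k.
Proof. by rewrite /column_cells -[in RHS]map_cell_enum filter_map. Qed.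

Lemma cell_mem (i : 'I_n) : @cell lam i \in cells lam.
Proof. exact: mem_nth. Qed.

End Cells.

Section ThreeBlocks.
Variables (a0 a1 a2 b0 b1 d0 d1 : nat).

Definition mpart := [:: [::]; [:: a0; a1; a2]; [:: b0; b1]; [:: d0; d1]].

Lemma cells_mpart : cells mpart =
  [seq (1,0,c) | c <- iota 0 a0] ++ [seq (1,1,c) | c <- iota 0 a1] ++
  [seq (1,2,c) | c <- iota 0 a2] ++ [seq (2,0,c) | c <- iota 0 b0] ++
  [seq (2,1,c) | c <- iota 0 b1] ++ [seq (3,0,c) | c <- iota 0 d0] ++
  [seq (3,1,c) | c <- iota 0 d1].
Proof. by rewrite /cells /= !cats0 !catA. Qed.

Lemma filter_row_cells (b' r m b j : nat) :
  [seq t <- [seq (b', r, c) | c <- iota 0 m] | (t.1.1, t.2) == (b, j)]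
  = if (b' == b) && (j < m) then [:: (b', r, j)] else [::].
Proof.
rewrite filter_map (eq_filter (a2 := fun c => (b' == b) && (c == j))); last first.
  by move=> c /=; rewrite xpair_eqE.
case: (b' == b) => /=; last by rewrite filter_pred0.
case: ltnP => jm; first by rewrite (@filter_pred1_uniq _ _ j) ?iota_uniq ?mem_iota.
rewrite (@eq_in_filter _ _ pred0) ?filter_pred0 // => c.
by rewrite mem_iota add0n => /andP[_ cm] /=; apply/negbTE; rewrite neq_ltn (leq_trans cm jm).
Qed.

Lemma column_cells1 j : column_cells mpart (1, j) =
  (if j < a0 then [:: (1,0,j)] else [::]) ++ (if j < a1 then [:: (1,1,j)] else [::]) ++
  (if j < a2 then [:: (1,2,j)] else [::]).
Proof. by rewrite /column_cells cells_mpart !filter_cat !filter_row_cells /= ?cats0. Qed.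

Lemma column_cells2 j : column_cells mpart (2, j) =
  (if j < b0 then [:: (2,0,j)] else [::]) ++ (if j < b1 then [:: (2,1,j)] else [::]).
Proof. by rewrite /column_cells cells_mpart !filter_cat !filter_row_cells /= ?cats0. Qed.

Lemma column_cells3 j : column_cells mpart (3, j) =
  (if j < d0 then [:: (3,0,j)] else [::]) ++ (if j < d1 then [:: (3,1,j)] else [::]).
Proof. by rewrite /column_cells cells_mpart !filter_cat !filter_row_cells /= ?cats0. Qed.

Lemma colkey_mpart (i : 'I_(size (cells mpart))) : a2 <= a1 <= a0 -> b1 <= b0 -> d1 <= d0 ->
  let: (b, j) := @colkey mpart i in
  [|| (b == 1) && (j < a0), (b == 2) && (j < b0) | (b == 3) && (j < d0)].
Proof.
move=> /andP[h1 h2] h3 h4; rewrite /colkey.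
have := cell_mem i; rewrite cells_mpart.
case: (@cell mpart i) => [[b r] c] /=.
rewrite !mem_cat => /or4P[| | |/or4P[| | |]] /mapP[c' ].
all: by rewrite mem_iota add0n => /andP[_ hc] [-> _ ->] /=; lia.
Qed.

End ThreeBlocks.

Section Matrices.
Variable F : fieldType.
Local Open Scope ring_scope.
Local Notation mx3 := (@mx3 F).

Lemma mx3_mul a b c d e f g h k a' b' c' d' e' f' g' h' k' :
  mx3 a b c d e f g h k * mx3 a' b' c' d' e' f' g' h' k' =
  mx3 (a*a'+b*d'+c*g') (a*b'+b*e'+c*h') (a*c'+b*f'+c*k')
      (d*a'+e*d'+f*g') (d*b'+e*e'+f*h') (d*c'+e*f'+f*k')
      (g*a'+h*d'+k*g') (g*b'+h*e'+k*h') (g*c'+h*f'+k*k').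
Proof.
apply/matrixP => i j; rewrite !mxE !big_ord_recr big_ord0 /= !mxE add0r.
by case: i => [[|[|[|//]]] ?]; case: j => [[|[|[|//]]] ?].
Qed.

Lemma mx3_add a b c d e f g h k a' b' c' d' e' f' g' h' k' :
  mx3 a b c d e f g h k + mx3 a' b' c' d' e' f' g' h' k' =
  mx3 (a+a') (b+b') (c+c') (d+d') (e+e') (f+f') (g+g') (h+h') (k+k').
Proof.
apply/matrixP => i j; rewrite !mxE.
by case: i => [[|[|[|//]]] ?]; case: j => [[|[|[|//]]] ?].
Qed.

Lemma mx3_opp a b c d e f g h k :
  - mx3 a b c d e f g h k = mx3 (-a) (-b) (-c) (-d) (-e) (-f) (-g) (-h) (-k).
Proof.
apply/matrixP => i j; rewrite !mxE.
by case: i => [[|[|[|//]]] ?]; case: j => [[|[|[|//]]] ?].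
Qed.

Lemma mx3_scale x a b c d e f g h k :
  x *: mx3 a b c d e f g h k = mx3 (x*a) (x*b) (x*c) (x*d) (x*e) (x*f) (x*g) (x*h) (x*k).
Proof.
apply/matrixP => i j; rewrite !mxE.
by case: i => [[|[|[|//]]] ?]; case: j => [[|[|[|//]]] ?].
Qed.

Lemma mx3_0 : mx3 0 0 0 0 0 0 0 0 0 = 0.
Proof.
apply/matrixP => i j; rewrite !mxE.
by case: i => [[|[|[|//]]] ?]; case: j => [[|[|[|//]]] ?].
Qed.

Lemma superstar_mx3 a b c d e f g h k :
  superstar (mx3 a b c d e f g h k) = mx3 a (-g) d c k (-f) (-b) (-h) e.
Proof. by rewrite /superstar /ent !mxE !inordK. Qed.

Definition Y1 := mx3 0 0 0 0 0 1 0 1 0.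
Definition Y2 := mx3 0 0 0 0 1 0 0 0 (-1).
Definition Y3 := mx3 0 0 0 0 0 1 0 0 0.
Definition Z1 := mx3 0 1 0 0 0 0 (-1) 0 0.
Definition Z2 := mx3 0 0 1 1 0 0 0 0 0.
Definition W1 := mx3 0 0 1 (-1) 0 0 0 0 0.
Definition W2 := mx3 0 1 0 0 0 0 1 0 0.

Lemma in_part0 t : in_part t (0 : 'M[F]_3).
Proof.
rewrite -mx3_0 /in_part /is_even /is_odd /ent !mxE !inordK //= superstar_mx3 mx3_opp !oppr0 eqxx.
by case: t => [|[|[|t]]] /=; apply/eqP.
Qed.

Lemma in_part_Y : [/\ in_part 1 Y1, in_part 1 Y2 & in_part 1 Y3].
Proof.
by rewrite /in_part /is_even /ent !mxE !inordK //= !superstar_mx3 !mx3_opp !oppr0 !opprK !eqxx.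
Qed.

Lemma in_part_Z : in_part 2 Z1 /\ in_part 2 Z2.
Proof.
rewrite /in_part /is_odd /ent !mxE !inordK //= !superstar_mx3 !eqxx.
by split; apply/eqP; rewrite ?oppr0 ?opprK.
Qed.

Lemma in_part_W : in_part 3 W1 /\ in_part 3 W2.
Proof.
rewrite /in_part /is_odd /ent !mxE !inordK //= !superstar_mx3 !mx3_opp !eqxx.
by split; apply/eqP; rewrite ?oppr0 ?opprK.
Qed.

Definition erow (s : nat) : 'M[F]_3 :=
  if s is 0 then mx3 1 0 0 0 0 0 0 0 0 else
  if s is 1 then mx3 0 1 0 0 0 0 0 0 0 else mx3 0 0 1 0 0 0 0 0 0.

Lemma erow_neq0 s : erow s != 0.
Proof.
case: s => [|[|s]]; apply/eqP => /matrixP.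
- by move/(_ 0 0); rewrite !mxE /= => /eqP; rewrite oner_eq0.
- by move/(_ 0 1); rewrite !mxE /= => /eqP; rewrite oner_eq0.
- by move/(_ 0 2); rewrite !mxE /= => /eqP; rewrite oner_eq0.
Qed.

Definition row_steps (tr : nat -> option nat) (M : 'M[F]_3) :=
  forall s s', tr s = Some s' -> exists2 a : F, a != 0 & erow s * M = a *: erow s'.

Lemma row_steps_prod (T : eqType) (tr : T -> nat -> option nat) (M : T -> 'M[F]_3) w s s' :
  (forall x, x \in w -> row_steps (tr x) (M x)) -> run tr w s = Some s' ->
  exists2 a : F, a != 0 & erow s * \prod_(x <- w) M x = a *: erow s'.
Proof.
elim: w s => [|x w IH] s Hw /=.
  by case=> <-; exists 1; rewrite ?oner_neq0 // big_nil mulr1 scale1r.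
case E: (tr x s) => [s1|] //= R.
have [a a0 Ea] := Hw x (mem_head _ _) s s1 E.
have [b b0 Eb] := IH s1 (fun y yw => Hw y (mem_behead (s := x :: w) yw)) R.
exists (a * b); first by rewrite mulf_neq0.
by rewrite big_cons mulrA Ea -scalerAl Eb scalerA.
Qed.

End Matrices.

Definition keep12 (s : nat) : option nat := match s with 1 | 2 => Some s | _ => None end.
Definition keep012 (s : nat) : option nat := if s <= 2 then Some s else None.
Definition swap12 (s : nat) : option nat := match s with 1 => Some 2 | 2 => Some 1 | _ => None end.
Definition step_Z (s : nat) : option nat := match s with 0 => Some 1 | 2 => Some 0 | _ => None end.
Definition step_W (s : nat) : option nat := match s with 0 => Some 2 | 1 => Some 0 | _ => None end.

Section RowSteps.
Local Open Scope ring_scope.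
Variable F : fieldType.
Hypothesis charF : [pchar F] =i pred0.
Local Notation mx3 := (@mx3 F).

Lemma natr_succ_neq0 k : k.+1%:R != 0 :> F.
Proof. by rewrite (pcharf0P _).1. Qed.

Lemma standard3_Y : standard3 (Y1 F) (Y2 F) (Y3 F) = mx3 0 0 0 0 3 0 0 0 3.
Proof. by rewrite /standard3 !mx3_mul !mx3_opp !mx3_add; congr mx3; ring. Qed.

Lemma commutator_Y : Y1 F * Y2 F - Y2 F * Y1 F = mx3 0 0 0 0 0 (-2) 0 2 0.
Proof. by rewrite !mx3_mul !mx3_opp !mx3_add; congr mx3; ring. Qed.

Lemma commutator_Z : Z1 F * Z2 F - Z2 F * Z1 F = mx3 2 0 0 0 (-1) 0 0 0 (-1).
Proof. by rewrite !mx3_mul !mx3_opp !mx3_add; congr mx3; ring. Qed.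

Lemma commutator_W : W1 F * W2 F - W2 F * W1 F = mx3 2 0 0 0 (-1) 0 0 0 (-1).
Proof. by rewrite !mx3_mul !mx3_opp !mx3_add; congr mx3; ring. Qed.

Lemma row_steps_standard3_Y : row_steps keep12 (standard3 (Y1 F) (Y2 F) (Y3 F)).
Proof.
rewrite standard3_Y => -[|[|[|s]]] //= s' [<-]; exists 3; rewrite ?natr_succ_neq0 //.
all: by rewrite !mx3_mul mx3_scale; congr mx3; ring.
Qed.

Lemma row_steps_commutator_Y : row_steps swap12 (Y1 F * Y2 F - Y2 F * Y1 F).
Proof.
rewrite commutator_Y => -[|[|[|s]]] //= s' [<-].
  by exists (-2); rewrite ?oppr_eq0 ?natr_succ_neq0 // !mx3_mul mx3_scale; congr mx3; ring.
by exists 2; rewrite ?natr_succ_neq0 // !mx3_mul mx3_scale; congr mx3; ring.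
Qed.

Lemma row_steps_Y1 : row_steps swap12 (Y1 F).
Proof.
move=> -[|[|[|s]]] //= s' [<-]; exists 1; rewrite ?oner_neq0 //.
all: by rewrite !mx3_mul mx3_scale; congr mx3; ring.
Qed.

Lemma row_steps_diag M : M = mx3 2 0 0 0 (-1) 0 0 0 (-1) -> row_steps keep012 M.
Proof.
move=> -> [|[|[|s]]] //= s' [<-].
- by exists 2; rewrite ?natr_succ_neq0 // !mx3_mul mx3_scale; congr mx3; ring.
- by exists (-1); rewrite ?oppr_eq0 ?oner_neq0 // !mx3_mul mx3_scale; congr mx3; ring.
- by exists (-1); rewrite ?oppr_eq0 ?oner_neq0 // !mx3_mul mx3_scale; congr mx3; ring.
Qed.

Lemma row_steps_Z1 : row_steps step_Z (Z1 F).
Proof.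
move=> -[|[|[|s]]] //= s' [<-].
  by exists 1; rewrite ?oner_neq0 // !mx3_mul mx3_scale; congr mx3; ring.
by exists (-1); rewrite ?oppr_eq0 ?oner_neq0 // !mx3_mul mx3_scale; congr mx3; ring.
Qed.

Lemma row_steps_W1 : row_steps step_W (W1 F).
Proof.
move=> -[|[|[|s]]] //= s' [<-].
  by exists 1; rewrite ?oner_neq0 // !mx3_mul mx3_scale; congr mx3; ring.
by exists (-1); rewrite ?oppr_eq0 ?oner_neq0 // !mx3_mul mx3_scale; congr mx3; ring.
Qed.

End RowSteps.

Lemma exists_perm_map_enum n (w : seq 'I_n) : perm_eq w (enum 'I_n) ->
  exists u : {perm 'I_n}, map u (enum 'I_n) = w.
Proof.
move=> pw; have sw : size w = n by rewrite (perm_size pw) size_enum_ord.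
have uw : uniq w by rewrite (perm_uniq pw) enum_uniq.
case: n w pw sw uw => [|m] w pw sw uw.
  by exists 1%g; case: w pw sw uw => //; rewrite enum_ord0.
have winj : injective (fun k : 'I_m.+1 => nth ord0 w k).
  by move=> i j /eqP; rewrite nth_uniq ?sw // => /eqP /val_inj.
exists (perm winj); rewrite -[RHS](mkseq_nth ord0) sw /mkseq -val_enum_ord -map_comp.
by apply: eq_map => i /=; rewrite permE.
Qed.

Section YoungEval.
Local Open Scope ring_scope.
Variables (F : fieldType) (lam : seq (seq nat)).
Local Notation n := (size (cells lam)).

Definition monomial (u : {perm 'I_n}) : {ffun {perm 'I_n} -> F} := [ffun s => (s == u)%:R].

Lemma eval_young_monomial u (A : 'I_n -> 'M[F]_3) :
  (forall r, r \in rowgrp lam -> forall i, A (r i) = A i) ->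
  eval (@young F lam (monomial u)) A =
  #|rowgrp lam|%:R *: \sum_(c in colgrp lam) (-1) ^+ odd_perm c *: \prod_(k < n) A (c (u k)).
Proof.
move=> AR; rewrite /eval.
under eq_bigr => s _ do rewrite ffunE scaler_suml.
rewrite exchange_big scaler_nat -sumr_const /=; apply: eq_bigr => r Rr.
under eq_bigr => s _ do rewrite scaler_suml.
rewrite exchange_big /=; apply: eq_bigr => c Cc.
rewrite (bigD1 (u * c * r)%g) //= [X in _ + X]big1 ?addr0.
  rewrite /act !ffunE !mulgK eqxx mulr1.
  by congr (_ *: _); apply: eq_bigr => k _; rewrite !permM AR.
move=> s ns; rewrite /act !ffunE; case: eqP => [E|_]; last by rewrite mulr0 scale0r.
by move: ns; rewrite -E !mulgKV eqxx.
Qed.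

Lemma colgrp_fiber_perms ks : (forall i, @colkey lam i \in ks) ->
  colgrp lam = fiber_perms (@colkey lam) ks.
Proof.
move=> allk; apply/setP => c; rewrite !inE (_ : perm_on _ c = true) //.
by apply/subsetP => x _; rewrite inE allk.
Qed.

Lemma colgrp_alt_prod ks u (A : 'I_n -> 'M[F]_3) :
  uniq ks -> (forall i, @colkey lam i \in ks) ->
  map u (enum 'I_n) = flatten (map (fiber (@colkey lam)) ks) ->
  \sum_(c in colgrp lam) (-1) ^+ odd_perm c *: \prod_(k < n) A (c (u k)) =
  \prod_(k <- ks) fiber_alt (@colkey lam) A k.
Proof.
move=> uks allk uE; rewrite (colgrp_fiber_perms allk) -big_fiber_perms //.
apply: eq_bigr => c _; rewrite scaler_sign mulr_sign -uE big_map enumT; unlock.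
by case: odd_perm.
Qed.

Lemma card_rowgrp_neq0 : [pchar F] =i pred0 -> #|rowgrp lam|%:R != 0 :> F.
Proof.
move=> charF; rewrite (pcharf0P _).1 // -lt0n; apply/card_gt0P; exists 1%g.
by rewrite inE; apply/forallP => i; rewrite perm1.
Qed.

Lemma mult_neq0 f (A : 'I_n -> 'M[F]_3) : (forall i, in_part (@blk lam i) (A i)) ->
  eval (@young F lam f) A != 0 -> mult F lam != 0%N.
Proof.
move=> Apart Ene.
have MG : mult_ge F lam 1.
  exists (fun _ => f) => cs Hid j; rewrite (ord1 j).
  move/eqP: (Hid A Apart); apply: contraTeq => cs0.
  rewrite (_ : eval _ A = cs ord0 *: eval (@young F lam f) A) ?scaler_eq0 ?negb_or ?cs0 //.
  by rewrite /eval scaler_sumr; apply: eq_bigr => s _; rewrite ffunE big_ord1 scalerA.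
have n1 : (1 < (factorial n).+1)%N by rewrite ltnS fact_gt0.
have := @leq_bigmax_cond _ (fun k : 'I_(factorial n).+1 => `[< mult_ge F lam k >])
  (fun k => nat_of_ord k) (Ordinal n1) (asboolT MG).
by rewrite /mult -lt0n.
Qed.

End YoungEval.

Section Proposition.
Local Open Scope ring_scope.
Variables (F : fieldType) (g1 g2 g3 w1 w2 r1 r2 : nat).
Hypothesis charF : [pchar F] =i pred0.

Local Notation lam := (mpart (g1 + g2 + g3) (g2 + g3) g3 (w1 + w2) w2 (r1 + r2) r2).
Local Notation n := (size (cells lam)).

Definition row_value (br : nat * nat) : 'M[F]_3 :=
  match br with
  | (1, 0) => Y1 F | (1, 1) => Y2 F | (1, 2) => Y3 F
  | (2, 0) => Z1 F | (2, 1) => Z2 F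
  | (3, 0) => W1 F | (3, 1) => W2 F
  | _ => 0%R
  end%N.

Definition subst_mx (i : 'I_n) : 'M[F]_3 := row_value (@rowkey lam i).

Lemma subst_mx_in_part i : in_part (@blk lam i) (subst_mx i).
Proof.
rewrite /subst_mx /blk /rowkey; case: (@cell lam i) => [[b r] c] /=.
have [? ? ?] := in_part_Y F; have [? ?] := in_part_Z F; have [? ?] := in_part_W F.
by case: b => [|[|[|[|b]]]]; case: r => [|[|[|r]]] => //; exact: in_part0.
Qed.

(* The first ntall b columns of block b are those of maximal height. *)
Definition ntall (b : nat) : nat := match b with 1 => g3 | 2 => w2 | 3 => r2 | _ => 0 end%N.
Definition tall (b : nat) : nat -> option nat := if b == 1%N then keep12 else keep012.
Definition short (b : nat) : nat -> option nat :=
  match b with 1 => swap12 | 2 => step_Z | 3 => step_W | _ => fun _ => None end%N.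
Local Notation column_step := (column_tr ntall tall short).
Local Notation column_value := (fiber_alt (@colkey lam) subst_mx).

Lemma row_steps_column1 j :
  (j < g1 + g2 + g3)%N -> row_steps (column_step (1, j)) (column_value (1, j)).
Proof.
move=> hj; have := map_cell_fiber lam (1, j); rewrite column_cells1 /column_tr /=.
case: (ltnP j g3) => j3.
  rewrite hj (leq_trans j3 (leq_addl _ _)).
  case E: (fiber _ _) => [|x [|y [|z [|? ?]]]] //= [cx cy cz].
  by rewrite (fiber_alt3 _ E) /subst_mx /rowkey cx cy cz; exact: row_steps_standard3_Y.
case: (ltnP j (g2 + g3)) => j23; rewrite hj ?j23 ?ltnNge ?j3 /=.
  case E: (fiber _ _) => [|x [|y [|? ?]]] //= [cx cy].
  by rewrite (fiber_alt2 _ E) /subst_mx /rowkey cx cy; exact: row_steps_commutator_Y.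
case E: (fiber _ _) => [|x [|? ?]] //= [cx].
by rewrite (fiber_alt1 _ E) /subst_mx /rowkey cx; exact: row_steps_Y1.
Qed.

Lemma row_steps_column2 j :
  (j < w1 + w2)%N -> row_steps (column_step (2, j)) (column_value (2, j)).
Proof.
move=> hj; have := map_cell_fiber lam (2, j); rewrite column_cells2 /column_tr /=.
case: (ltnP j w2) => j2; rewrite hj ?(leq_trans j2 (leq_addl _ _)) ?ltnNge ?j2 /=.
  case E: (fiber _ _) => [|x [|y [|? ?]]] //= [cx cy].
  rewrite (fiber_alt2 _ E) /subst_mx /rowkey cx cy.
  exact/row_steps_diag/commutator_Z.
case E: (fiber _ _) => [|x [|? ?]] //= [cx].
by rewrite (fiber_alt1 _ E) /subst_mx /rowkey cx; exact: row_steps_Z1.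
Qed.

Lemma row_steps_column3 j :
  (j < r1 + r2)%N -> row_steps (column_step (3, j)) (column_value (3, j)).
Proof.
move=> hj; have := map_cell_fiber lam (3, j); rewrite column_cells3 /column_tr /=.
case: (ltnP j r2) => j2; rewrite hj ?(leq_trans j2 (leq_addl _ _)) ?ltnNge ?j2 /=.
  case E: (fiber _ _) => [|x [|y [|? ?]]] //= [cx cy].
  rewrite (fiber_alt2 _ E) /subst_mx /rowkey cx cy.
  exact/row_steps_diag/commutator_W.
case E: (fiber _ _) => [|x [|? ?]] //= [cx].
by rewrite (fiber_alt1 _ E) /subst_mx /rowkey cx; exact: row_steps_W1.
Qed.

Definition surplus := absdiff w1 r1.
Definition nsep := (surplus.-1)./2.
Definition npad := (g1 + g2 - nsep)%N.

(* Z_1 and W_1 alternate between the state 0 and one of the states 1, 2; two successive surplus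
   columns lead from the latter to the other one of 1, 2, and a column of lambda(2) of height at
   most 2 swaps them back. *)
Definition short_word : seq nat :=
  if (r1 <= w1)%N then alt_word 2 3 r1 ++ sep_word 2 1 surplus
  else alt_word 3 2 w1 ++ sep_word 3 1 surplus.

Definition column_word : seq nat :=
  nseq w2 2 ++ nseq r2 3 ++ nseq g3 1 ++ (nseq npad 1 ++ short_word).

Definition column_order := number_occ (fun _ => 0%N) column_word.

(* Each padding column of lambda(2) swaps the states 1 and 2, hence the parity of npad. *)
Definition start_state : nat :=
  if (r1 <= w1)%N then (if odd npad then 1 else 2)%N else (if odd npad then 2 else 1)%N.

Lemma count_column_word : (nsep <= g1 + g2)%N ->
  [/\ count_mem 1%N column_word = (g1 + g2 + g3)%N, count_mem 2%N column_word = (w1 + w2)%N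
    & count_mem 3%N column_word = (r1 + r2)%N].
Proof.
move=> hs; rewrite /column_word /short_word !count_cat !count_nseq /=.
case: ifP => h; rewrite !count_cat !count_alt_word !count_sep_word /= -/nsep.
all: by rewrite /npad /surplus /absdiff; split; lia.
Qed.

Lemma run_column_order : exists s, run column_step column_order start_state = Some s.
Proof.
have fix_start b : tall b start_state = Some start_state.
  by rewrite /tall /start_state; case: ifP; case: ifP; case: odd.
rewrite /column_order /column_word 3!number_occ_cat.
do 3 (rewrite run_cat run_tall_columns /= ?count_nseq /= ?addn0 ?fix_start //).
rewrite run_short_columns; last first.
  by case=> [|[|[|[|b]]]] /=; rewrite ?count_nseq /= ?addn0 ?add0n ?muln1 ?mul1n ?muln0.
rewrite run_cat /start_state /short_word; case: ifP => _.
  rewrite (@run_nseq_swap _ _ short 1 2 1) //= run_cat (@run_alt_word _ _ short 2 3 2 0) //=.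
  exact: (@run_sep_word _ _ short 2 1 2 0 1).
rewrite (@run_nseq_swap _ _ short 1 1 2) //= run_cat (@run_alt_word _ _ short 3 2 1 0) //=.
exact: (@run_sep_word _ _ short 3 1 1 0 2).
Qed.

Lemma mem_column_order b j : ((b, j) \in column_order) = (j < count_mem b column_word)%N.
Proof. by rewrite mem_number_occ. Qed.

Hypothesis nsep_le : (nsep <= g1 + g2)%N.

Lemma colkey_in_column_order (i : 'I_n) : @colkey lam i \in column_order.
Proof.
have [c1 c2 c3] := count_column_word nsep_le.
have := @colkey_mpart _ _ _ _ _ _ _ i.
case: (@colkey lam i) => b j /(_ _ (leq_addl _ _) (leq_addl _ _)) /=.
have h : (g3 <= g2 + g3 <= g1 + g2 + g3)%N by apply/andP; split; lia.
rewrite mem_column_order => /(_ h) /or3P[] /andP[/eqP -> hj]; by rewrite ?c1 ?c2 ?c3.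
Qed.

Lemma row_steps_column k : k \in column_order -> row_steps (column_step k) (column_value k).
Proof.
have [c1 c2 c3] := count_column_word nsep_le.
case: k => [[|[|[|[|b]]]] j]; rewrite mem_column_order ?c1 ?c2 ?c3 => hj.
- by move=> s s'.
- exact: row_steps_column1.
- exact: row_steps_column2.
- exact: row_steps_column3.
- by move=> s s'.
Qed.

Lemma column_values_prod_neq0 : \prod_(k <- column_order) column_value k != 0.
Proof.
have [s run_s] := run_column_order.
have [a a0 Ea] := row_steps_prod row_steps_column run_s.
apply/eqP => P0; move: Ea; rewrite P0 mulr0 => /esym/eqP.
by rewrite scaler_eq0 (negPf a0) (negPf (erow_neq0 F _)).
Qed.

Lemma mult_mpart_neq0 : mult F lam != 0%N.
Proof.
have uks := number_occ_uniq column_word (fun _ => 0%N).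
have [u uE] := exists_perm_map_enum (perm_flatten_fibers uks colkey_in_column_order).
apply: (@mult_neq0 _ _ (monomial F u) _ subst_mx_in_part).
rewrite eval_young_monomial => [|r]; last first.
  by rewrite inE => /forallP rk i; rewrite /subst_mx (eqP (rk i)).
rewrite (colgrp_alt_prod _ uks colkey_in_column_order uE) scaler_eq0 negb_or.
by rewrite card_rowgrp_neq0 // column_values_prod_neq0.
Qed.

End Proposition.

Lemma half_pred_absdiff_le w r m :
  (absdiff w r <= 2) || ((3 <= absdiff w r) && (uphalf (maxn w r) - 1 <= m)) ->
  (absdiff w r).-1./2 <= m.
Proof.
rewrite leq_half_double => /orP[h|/andP[_ h]]; first lia.
by move: h; have := odd_double_half (maxn w r).+1; rewrite -uphalfE /absdiff; case: odd => /=; lia.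
Qed.

Theorem proposition5p12 (F : fieldType) (charF0 : [pchar F]%R =i pred0)
    (g1 g2 g3 w1 w2 r1 r2 : nat) :
  let lam2 := [:: g1 + g2 + g3; g2 + g3; g3] in
  let lam3 := [:: w1 + w2; w2] in
  let lam4 := [:: r1 + r2; r2] in
  sumn lam2 != 0 -> sumn lam3 != 0 -> sumn lam4 != 0 ->
  let l := maxn w1 r1 in
  (absdiff w1 r1 <= 2) || ((3 <= absdiff w1 r1) && (uphalf l - 1 <= g1 + g2)) ->
  mult F [:: [::]; lam2; lam3; lam4] != 0.
Proof.
move=> lam2 lam3 lam4 _ _ _ l hyp.
exact: (mult_mpart_neq0 _ _ _ charF0 (half_pred_absdiff_le hyp)).
Qed.
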